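(* Let $A=H+S\in\mathbb{C}^{n,n}$, where $H=H^*$ is positive semidefinite with $H\neq 0$, and $S=-S^*$ with $S\neq 0$. Then there exist a unitary matrix $U\in\mathbb{C}^{n,n}$, an integer $r\geq 2$, and integers $n_1\geq n_2\geq\cdots\geq n_{r-1}>0$ and $n_r\geq 0$ with $n_1+\cdots+n_r=n$, such that, partitioning conformally with the block sizes $n_1,\dots,n_r$, $$U^*HU=\begin{bmatrix} H_{11} & 0\\ 0 & 0\end{bmatrix},\qquad U^*SU=\begin{bmatrix} S_{11} & S_{12} & & & 0\\ S_{21} & S_{22} & \ddots & & 0\\ & \ddots & \ddots & S_{r-2,r-1} & \vdots\\ & & S_{r-1,r-2} & S_{r-1,r-1} & 0\\ 0 & \cdots & \cdots & 0 & S_{r,r}\end{bmatrix},$$ that is, $U^*SU=[S_{ij}]_{i,j=1}^r$ with $S_{ij}\in\mathbb{C}^{n_i,n_j}$, $S_{ij}=0$ whenever $|i-j|>1$, and $S_{i,r}=0$, $S_{r,i}=0$ for all $i<r$; where $H_{11}=H_{11}^*\in\mathbb{C}^{n_1,n_1}$ is positive definite, $S_{ii}=-S_{ii}^*\in\mathbb{C}^{n_i,n_i}$ for $i=1,\dots,r$, and $S_{i,i-1}=-S_{i-1,i}^*=[\Sigma_{i,i-1}\;\,0]\in\mathbb{C}^{n_i,n_{i-1}}$ with $\Sigma_{i,i-1}\in\mathbb{C}^{n_i,n_i}$ nonsingular for $i=2,\dots,r-1$.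
   Context: $M^*$ denotes the conjugate transpose of $M$. A block of size $0$ is understood to be absent. *)

From mathcomp Require Import all_boot all_order all_algebra.
From mathcomp Require Export sesquilinear spectral.
Set Implicit Arguments. Unset Strict Implicit. Unset Printing Implicit Defensive.
Import Order.TTheory GRing.Theory Num.Theory.
Local Open Scope ring_scope.
Local Open Scope sesquilinear_scope.

Definition ctr {C : numClosedFieldType} m n (M : 'M[C]_(m, n)) : 'M[C]_(n, m) :=
  M ^t*.

Definition hermmx {C : numClosedFieldType} n (M : 'M[C]_n) : Prop :=
  ctr M = M.
Definition skewhermmx {C : numClosedFieldType} n (M : 'M[C]_n) : Prop :=
  ctr M = - M.

Definition psdmx {C : numClosedFieldType} n (M : 'M[C]_n) : Prop :=
  hermmx M /\ forall x : 'cV[C]_n, 0 <= (ctr x *m M *m x) 0 0.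
Definition pdmx {C : numClosedFieldType} n (M : 'M[C]_n) : Prop :=
  hermmx M /\ forall x : 'cV[C]_n, x != 0 -> 0 < (ctr x *m M *m x) 0 0.

Definition blk {C : numClosedFieldType} n r (nb : 'I_r -> nat)
  (hs : (\sum_(i < r) nb i)%N = n) (M : 'M[C]_n) (i j : 'I_r) : 'M[C]_(nb i, nb j) :=
  @submxblock C r r nb nb (castmx (esym hs, esym hs) M) i j.

From mathcomp Require Import all_boot all_order all_algebra.
From mathcomp Require Import sesquilinear spectral.
From mathcomp Require Import zify ring.
Import Order.TTheory GRing.Theory Num.Theory Num.Def.
Local Open Scope ring_scope.
Set Implicit Arguments. Unset Strict Implicit. Unset Printing Implicit Defensive.

(* A unitary change of basis adapted to the range of H and its orthogonal
   complement turns H into diag(H11, 0) with H11 positive definite of size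
   k = rank H. A unitary rank
   decomposition P S21 Q^* = [Sig 0; 0 0], with Sig nonsingular of size
   p = rank S21 <= k, shows that conjugating by the block-diagonal unitary
   with blocks Q^* and P^* turns S21 into [Sig 0; 0 0]. Recursing on the
   trailing block, now with leading block of size p, until the subdiagonal
   block vanishes gives the block sizes k >= p >= ... > 0. Block-diagonal
   unitary transformations keep H in the form diag(H11', 0), and the zero
   pattern above the block diagonal follows from skew-Hermitian symmetry. *)

Local Notation "B ^!" :=
  (orthomx conjC (mx_of_hermitian (hermitian1mx _)) B) : matrix_set_scope.

Section CastMatrices.
Variable R : pzSemiRingType.

Lemma mul_castmx m n p m' n' p' (em : m = m') (en : n = n') (ep : p = p')
    (A : 'M[R]_(m, n)) (B : 'M[R]_(n, p)) :
  castmx (em, en) A *m castmx (en, ep) B = castmx (em, ep) (A *m B).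
Proof. by case: m' / em; case: n' / en; case: p' / ep; rewrite !castmx_id. Qed.

Lemma castmx_mull m m' n p (e : m = m') (A : 'M[R]_(m, n)) (B : 'M[R]_(n, p)) :
  castmx (e, erefl n) A *m B = castmx (e, erefl p) (A *m B).
Proof. by case: m' / e; rewrite !castmx_id. Qed.

Lemma castmx_mulr m n p p' (e : p = p') (A : 'M[R]_(m, n)) (B : 'M[R]_(n, p)) :
  A *m castmx (erefl n, e) B = castmx (erefl m, e) (A *m B).
Proof. by case: p' / e; rewrite !castmx_id. Qed.

Lemma castmx_block_mx_ul p p' q a b m k (ep : p = p') (e1 : (p' + a = m)%N)
    (e1' : (p + a = m)%N) (e2 : (q + b = k)%N) (X : 'M[R]_(p, q)) :
  castmx (e1, e2) (block_mx (castmx (ep, erefl q) X) 0 0 (0 : 'M_(a, b))) =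
  castmx (e1', e2) (block_mx X 0 0 0).
Proof. by case: p' / ep e1 => e1; rewrite castmx_id (eq_irrelevance e1 e1'). Qed.

End CastMatrices.

Section ConjugateTranspose.
Variable C : numClosedFieldType.

Lemma ctrK m n (A : 'M[C]_(m, n)) : ctr (ctr A) = A.
Proof. exact: trmxCK. Qed.

Lemma ctr_mul m n p (A : 'M[C]_(m, n)) (B : 'M[C]_(n, p)) :
  ctr (A *m B) = ctr B *m ctr A.
Proof. by rewrite /ctr trmx_mul map_mxM. Qed.

Lemma ctr0 m n : ctr (0 : 'M[C]_(m, n)) = 0.
Proof. by rewrite /ctr trmx0 map_mx0. Qed.

Lemma ctr1 n : ctr (1%:M : 'M[C]_n) = 1%:M.
Proof. by rewrite /ctr trmx1 map_mx1. Qed.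

Lemma ctrB m n (A B : 'M[C]_(m, n)) : ctr (A - B) = ctr A - ctr B.
Proof. by rewrite /ctr linearB /= map_mxB. Qed.

Lemma ctrZ m n (a : C) (A : 'M[C]_(m, n)) : ctr (a *: A) = a^* *: ctr A.
Proof. by rewrite /ctr linearZ /= map_mxZ. Qed.

Lemma ctr_entry m n (A : 'M[C]_(m, n)) i j : ctr A i j = (A j i)^*.
Proof. by rewrite !mxE. Qed.

Lemma ctr_block_mx m1 m2 n1 n2 (A : 'M[C]_(m1, n1)) (B : 'M[C]_(m1, n2))
    (A' : 'M[C]_(m2, n1)) (B' : 'M[C]_(m2, n2)) :
  ctr (block_mx A B A' B') = block_mx (ctr A) (ctr A') (ctr B) (ctr B').
Proof. by rewrite /ctr tr_block_mx map_block_mx. Qed.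

Lemma ctr_col_mx m1 m2 n (A : 'M[C]_(m1, n)) (B : 'M[C]_(m2, n)) :
  ctr (col_mx A B) = row_mx (ctr A) (ctr B).
Proof. by rewrite /ctr tr_col_mx map_row_mx. Qed.

Lemma ctr_castmx m n m' n' (em : m = m') (en : n = n') (A : 'M[C]_(m, n)) :
  ctr (castmx (em, en) A) = castmx (en, em) (ctr A).
Proof. by case: m' / em; case: n' / en; rewrite !castmx_id. Qed.

Lemma conj_castmx n n' (e : n = n') (U : 'M[C]_n) (X : 'M[C]_n') :
  ctr (castmx (e, e) U) *m X *m castmx (e, e) U =
  castmx (e, e) (ctr U *m castmx (esym e, esym e) X *m U).
Proof. by case: n' / e X => X; rewrite !castmx_id. Qed.

Lemma conj_block_diag k m (Q : 'M[C]_k) (W : 'M[C]_m) (S : 'M[C]_(k + m)) :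
  ctr (block_mx Q 0 0 W) *m S *m block_mx Q 0 0 W =
  block_mx (ctr Q *m ulsubmx S *m Q) (ctr Q *m ursubmx S *m W)
           (ctr W *m dlsubmx S *m Q) (ctr W *m drsubmx S *m W).
Proof.
rewrite -{1}[S]submxK ctr_block_mx !ctr0 !mulmx_block.
by rewrite !mulmx0 !mul0mx !addr0 !add0r.
Qed.

Lemma mul_ctr_unitary n (U : 'M[C]_n) : U \is unitarymx -> ctr U *m U = 1%:M.
Proof. by move=> uU; rewrite -[ctr U]mul1mx mulmxKtV. Qed.

Lemma unitarymx1 n : (1%:M : 'M[C]_n) \is unitarymx.
Proof. by apply/unitarymxP; rewrite mul1mx -/(ctr _) ctr1. Qed.

Lemma castmx_unitary m n m' n' (e : (m = m') * (n = n')) (U : 'M[C]_(m, n)) :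
  U \is unitarymx -> castmx e U \is unitarymx.
Proof. by case: e => em en; case: m' / em; case: n' / en; rewrite castmx_id. Qed.

Lemma block_diag_unitary m n (Q : 'M[C]_m) (W : 'M[C]_n) :
  Q \is unitarymx -> W \is unitarymx -> block_mx Q 0 0 W \is unitarymx.
Proof.
move=> /unitarymxP uQ /unitarymxP uW; apply/unitarymxP.
rewrite -/(ctr _) ctr_block_mx !ctr0 mulmx_block /ctr uQ uW.
by rewrite !mulmx0 !mul0mx !addr0 !add0r -scalar_mx_block.
Qed.

Lemma ctr_mul_dotmx n (z : 'cV[C]_n) : (ctr z *m z) 0 0 = dotmx (ctr z) (ctr z).
Proof. by rewrite dotmxE -/(ctr _) ctrK. Qed.

Lemma ctr_mul_ge0 n (z : 'cV[C]_n) : 0 <= (ctr z *m z) 0 0.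
Proof. by rewrite ctr_mul_dotmx dnorm_ge0. Qed.

Lemma ctr_mul_eq0 n (z : 'cV[C]_n) : ((ctr z *m z) 0 0 == 0) = (z == 0).
Proof.
rewrite ctr_mul_dotmx dnorm_eq0.
by apply/eqP/eqP => [h|->]; [rewrite -[z]ctrK h ctr0 | rewrite ctr0].
Qed.

End ConjugateTranspose.

Section NatIndexedEntries.
Variable C : numClosedFieldType.

(* Entries at natural-number positions, 0 out of range: they ignore castmx
   and let block positions be computed with nat arithmetic. *)
Definition ent m n (M : 'M[C]_(m, n)) (x y : nat) : C :=
  match @insub _ (fun x => x < m)%N 'I_m x, @insub _ (fun y => y < n)%N 'I_n y with
  | Some i, Some j => M i j
  | _, _ => 0
  end.

Lemma entE m n (M : 'M[C]_(m, n)) (i : 'I_m) (j : 'I_n) : ent M i j = M i j.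
Proof. by rewrite /ent !valK. Qed.

Lemma ent_out m n (M : 'M[C]_(m, n)) x y :
  ~~ ((x < m) && (y < n))%N -> ent M x y = 0.
Proof.
rewrite negb_and /ent => /orP[hx|hy]; first by rewrite insubN.
by case: insub => // ?; rewrite insubN.
Qed.

Lemma ent_castmx m n m' n' (e : (m = m') * (n = n')) (M : 'M[C]_(m, n)) x y :
  ent (castmx e M) x y = ent M x y.
Proof. by case: e => em en; case: m' / em; case: n' / en; rewrite castmx_id. Qed.

Lemma ent0 m n x y : ent (0 : 'M[C]_(m, n)) x y = 0.
Proof.
have [/andP[hx hy]|out] := boolP ((x < m) && (y < n))%N; last by rewrite ent_out.
by rewrite -[x]/(val (Ordinal hx)) -[y]/(val (Ordinal hy)) entE mxE.
Qed.

Lemma entN m n (M : 'M[C]_(m, n)) x y : ent (- M) x y = - ent M x y.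
Proof.
have [/andP[hx hy]|out] := boolP ((x < m) && (y < n))%N; last by rewrite !ent_out ?oppr0.
by rewrite -[x]/(val (Ordinal hx)) -[y]/(val (Ordinal hy)) !entE mxE.
Qed.

Lemma ent_ctr m n (M : 'M[C]_(m, n)) x y : ent (ctr M) x y = (ent M y x)^*.
Proof.
have [/andP[hx hy]|out] := boolP ((x < n) && (y < m))%N.
  by rewrite -[x]/(val (Ordinal hx)) -[y]/(val (Ordinal hy)) !entE !mxE.
by rewrite !ent_out ?conjC0 // andbC.
Qed.

Lemma ent_skew n (M : 'M[C]_n) x y : ctr M = - M -> ent M x y = - (ent M y x)^*.
Proof. by move=> skM; rewrite -ent_ctr skM entN opprK. Qed.

Lemma ent_block_mx m1 m2 n1 n2 (A : 'M[C]_(m1, n1)) (B : 'M[C]_(m1, n2))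
    (A' : 'M[C]_(m2, n1)) (B' : 'M[C]_(m2, n2)) x y :
  ent (block_mx A B A' B') x y =
  if (x < m1)%N then (if (y < n1)%N then ent A x y else ent B x (y - n1))
  else (if (y < n1)%N then ent A' (x - m1) y else ent B' (x - m1) (y - n1)).
Proof.
have [/andP[hx hy]|out] := boolP ((x < m1 + m2) && (y < n1 + n2))%N; last first.
  by rewrite ent_out //; do 2!case: ifP => ?; rewrite ent_out //; move: out; lia.
rewrite -[ent _ x y]/(ent _ (Ordinal hx) (Ordinal hy)) entE.
rewrite -(splitK (Ordinal hx)) -(splitK (Ordinal hy)).
case: splitP => i /= ->; case: splitP => j /= ->.
- by rewrite block_mxEul !ltn_ord entE.
- by rewrite block_mxEur ltn_ord ltnNge leq_addr addKn entE.
- by rewrite block_mxEdl ltn_ord ltnNge leq_addr addKn entE.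
- by rewrite block_mxEdr !ltnNge !leq_addr !addKn entE.
Qed.

Lemma ent_block_mx_dr m1 m2 n1 n2 (A : 'M[C]_(m1, n1)) (B : 'M[C]_(m1, n2))
    (A' : 'M[C]_(m2, n1)) (B' : 'M[C]_(m2, n2)) x y :
  ent (block_mx A B A' B') (m1 + x) (n1 + y) = ent B' x y.
Proof. by rewrite ent_block_mx !ltnNge !leq_addr /= !addKn. Qed.

Lemma ent_block_mx_dl m1 m2 n1 n2 (A : 'M[C]_(m1, n1)) (B : 'M[C]_(m1, n2))
    (A' : 'M[C]_(m2, n1)) (B' : 'M[C]_(m2, n2)) x y :
  (y < n1)%N -> ent (block_mx A B A' B') (m1 + x) y = ent A' x y.
Proof. by move=> y_lt; rewrite ent_block_mx ltnNge leq_addr /= y_lt addKn. Qed.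

Lemma ent_block_mx_ul0 m1 m2 n1 n2 (A : 'M[C]_(m1, n1)) x y :
  ent (block_mx A 0 0 0 : 'M_(m1 + m2, n1 + n2)) x y =
  if (x < m1)%N && (y < n1)%N then ent A x y else 0.
Proof. by rewrite ent_block_mx; case: (x < m1)%N; case: (y < n1)%N; rewrite ?ent0. Qed.

End NatIndexedEntries.

Section UnitaryRankForm.
Variable C : numClosedFieldType.

Lemma schmidt_row_base_ortho m n (A : 'M[C]_(m, n)) :
  schmidt (row_base A^!%MS) *m ctr A = 0.
Proof.
by apply/orthomx1P; rewrite eqmx_schmidt_free ?row_base_free // eq_row_base.
Qed.

Lemma schmidt_row_base_proj m n (A : 'M[C]_(m, n)) :
  A *m ctr (schmidt (row_base A)) *m schmidt (row_base A) = A.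
Proof.
set Q := schmidt _.
have /submxP[X defA] : (A <= Q)%MS.
  by rewrite eqmx_schmidt_free ?row_base_free // eq_row_base.
have := congr1 (mulmx^~ (ctr Q)) defA.
by rewrite /= mulmxtVK ?schmidt_unitarymx ?rank_leq_col // => ->.
Qed.

(* A weak singular value decomposition: only the rank block is made
   nonsingular, it need not be diagonal. *)
Lemma unitary_rank_form m k (A : 'M[C]_(m, k)) :
  exists p a b (e1 : (p + a = m)%N) (e2 : (p + b = k)%N)
         (P : 'M[C]_m) (Q : 'M[C]_k) (Sig : 'M[C]_p),
    [/\ \rank A = p, P \is unitarymx, Q \is unitarymx, Sig \in unitmx &
        P *m A *m ctr Q = castmx (e1, e2) (block_mx Sig 0 0 0)].
Proof.
set P1 := schmidt (row_base (ctr A)); set Q1 := schmidt (row_base A).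
pose Sig := P1 *m A *m ctr Q1.
have eP : (\rank (ctr A) + \rank (ctr A)^! = m)%N by exact: add_rank_ortho.
have eQ : (\rank A + \rank A^! = k)%N by exact: add_rank_ortho.
have er : \rank (ctr A) = \rank A by rewrite /ctr mxrank_map mxrank_tr.
have e1 : (\rank A + \rank (ctr A)^! = m)%N by rewrite -er.
have blockE : schmidt_complete (ctr A) *m A *m ctr (schmidt_complete A) =
              block_mx Sig 0 0 0.
  have := schmidt_row_base_ortho (ctr A); rewrite ctrK => P2A.
  have := congr1 (@ctr _ _ _) (schmidt_row_base_ortho A).
  rewrite ctr_mul ctrK ctr0 => AQ2.
  rewrite /schmidt_complete -/P1 -/Q1 mul_col_mx P2A ctr_col_mx mul_col_row.
  by rewrite -!mulmxA AQ2 !mul0mx mulmx0 mulmxA.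
have defA : A = ctr P1 *m Sig *m Q1.
  have := congr1 (@ctr _ _ _) (schmidt_row_base_proj (ctr A)).
  rewrite !ctr_mul !ctrK mulmxA => P1A.
  by rewrite /Sig !mulmxA P1A schmidt_row_base_proj.
have rkSig : \rank Sig = \rank A.
  apply/eqP; rewrite eqn_leq rank_leq_col /=.
  have := leq_trans (mxrankM_maxl (ctr P1 *m Sig) Q1) (mxrankM_maxr (ctr P1) Sig).
  by rewrite -defA.
exists (\rank A), (\rank (ctr A)^!), (\rank A^!), e1, eQ.
exists (castmx (eP, erefl m) (schmidt_complete (ctr A))).
exists (castmx (eQ, erefl k) (schmidt_complete A)), (castmx (er, erefl _) Sig).
split=> //; try exact/castmx_unitary/schmidt_complete_unitarymx.
  by rewrite -row_free_unit row_free_castmx /row_free rkSig er.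
rewrite ctr_castmx !castmx_mull castmx_mulr castmx_comp blockE.
by rewrite (castmx_block_mx_ul _ _ eP); apply: eq_castmx.
Qed.

End UnitaryRankForm.

Section PositiveSemidefinite.
Variable C : numClosedFieldType.

Lemma psdmx_form_eq0 n (H : 'M[C]_n) (y : 'cV[C]_n) :
  psdmx H -> (ctr y *m H *m y) 0 0 = 0 -> H *m y = 0.
Proof.
move=> [hH psdH] yHy0; set z := H *m y.
set N := (ctr z *m z) 0 0; set K := (ctr z *m H *m z) 0 0.
have N_ge0 : 0 <= N by exact: ctr_mul_ge0.
have K_ge0 : 0 <= K by exact: psdH.
have formE e : e \is Num.real ->
    (ctr (y - e *: z) *m H *m (y - e *: z)) 0 0 = e ^+ 2 * K - 2 * e * N.
  move=> e_real; have yHz : ctr y *m H *m z = ctr z *m z.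
    by rewrite /z -{1}hH -ctr_mul.
  have zHy : ctr z *m H *m y = ctr z *m z by rewrite -mulmxA.
  rewrite ctrB ctrZ conj_Creal // !mulmxBl !mulmxBr -!scalemxAl -!scalemxAr.
  rewrite yHz zHy; move: yHy0; rewrite /N /K.
  move: (ctr y *m H *m y) (ctr z *m z) (ctr z *m H *m z) => yHy zz zHz yHy0.
  by rewrite !mxE yHy0; ring.
(* At e = N / (K + 1) the form equals -N^2 (K + 2) / (K + 1)^2, so N = 0. *)
pose e := N / (K + 1).
have K1_gt0 : 0 < K + 1 by rewrite ltr_wpDl.
have := psdH (y - e *: z).
rewrite formE; last by rewrite ger0_real // divr_ge0 // ltW.
have -> : e ^+ 2 * K - 2 * e * N = - (N ^+ 2 * ((K + 2) / (K + 1) ^+ 2)).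
  by rewrite /e; field; rewrite gt_eqF.
rewrite oppr_ge0 => le0; apply/eqP; rewrite -ctr_mul_eq0 -/N.
apply: contraTT le0 => N_neq0.
by rewrite lt_geF // mulr_gt0 ?divr_gt0 ?exprn_gt0 ?ltr_wpDl // lt0r N_neq0.
Qed.

Lemma pdmx_unitary_conj k (D Q : 'M[C]_k) :
  pdmx D -> Q \is unitarymx -> pdmx (ctr Q *m D *m Q).
Proof.
move=> [hD pdD] uQ; split; first by rewrite /hermmx !ctr_mul ctrK hD mulmxA.
move=> x x_neq0.
have -> : ctr x *m (ctr Q *m D *m Q) *m x = ctr (Q *m x) *m D *m (Q *m x).
  by rewrite ctr_mul !mulmxA.
apply: pdD; apply: contra x_neq0 => /eqP Qx0.
by rewrite -[x]mul1mx -(mul_ctr_unitary uQ) -mulmxA Qx0 mulmx0.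
Qed.

Lemma pdmx_restrict n k (H : 'M[C]_n) (V : 'M[C]_(k, n)) :
  psdmx H -> V \is unitarymx -> (V <= H)%MS -> pdmx (V *m H *m ctr V).
Proof.
move=> psdH uV sVH; have [hH psdH'] := psdH.
split; first by rewrite /hermmx !ctr_mul ctrK hH mulmxA.
move=> x x_neq0; set y := ctr V *m x.
have -> : ctr x *m (V *m H *m ctr V) *m x = ctr y *m H *m y.
  by rewrite /y ctr_mul ctrK !mulmxA.
rewrite lt_def psdH' andbT; apply: contra x_neq0 => /eqP yHy0.
have yH0 : ctr y *m H = 0.
  by rewrite -hH -ctr_mul psdmx_form_eq0 // ctr0.
have : (ctr y <= H :&: H^!)%MS.
  rewrite sub_capmx; apply/andP; split; last by apply/orthomx1P; rewrite -/(ctr H) hH.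
  by rewrite /y ctr_mul ctrK (submx_trans (submxMl _ _)).
rewrite orthomx_ortho_disj submx0 /y ctr_mul ctrK => /eqP xV0.
by rewrite -[x]ctrK -[ctr x]mulmx1 -(unitarymxP uV) mulmxA xV0 mul0mx ctr0.
Qed.

Lemma psdmx_unitary_compress n (H : 'M[C]_n) : psdmx H ->
  exists m (e : (\rank H + m = n)%N) (V : 'M[C]_n) (H11 : 'M[C]_(\rank H)),
    [/\ V \is unitarymx, pdmx H11 &
        ctr V *m H *m V = castmx (e, e) (block_mx H11 0 0 0)].
Proof.
move=> psdH; have hH := psdH.1.
set V1 := schmidt (row_base H); set V2 := schmidt (row_base H^!%MS).
have e : (\rank H + \rank H^! = n)%N by exact: add_rank_ortho.
exists (\rank H^!), e, (ctr (castmx (e, erefl n) (schmidt_complete H))).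
exists (V1 *m H *m ctr V1); split.
- by rewrite trmxC_unitary castmx_unitary ?schmidt_complete_unitarymx.
- apply: pdmx_restrict; rewrite ?schmidt_unitarymx ?rank_leq_col //.
  by rewrite eqmx_schmidt_free ?row_base_free // eq_row_base.
have V2H : V2 *m H = 0 by have := schmidt_row_base_ortho H; rewrite hH.
have HV2 : H *m ctr V2 = 0.
  by have := congr1 (@ctr _ _ _) V2H; rewrite ctr_mul hH ctr0.
rewrite ctrK ctr_castmx castmx_mull mul_castmx; congr castmx.
rewrite /schmidt_complete -/V1 -/V2 mul_col_mx V2H ctr_col_mx mul_col_row.
have -> : V1 *m H *m ctr V2 = 0 by rewrite -mulmxA HV2 mulmx0.
by rewrite !mul0mx.
Qed.

End PositiveSemidefinite.

Definition offset (s : seq nat) b := sumn (take b s).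
Definition in_block (s : seq nat) (l b x : nat) :=
  (offset s b <= x < offset s b + nth l s b)%N.

Lemma in_block_cons k s l b x :
  in_block (k :: s) l b.+1 x -> exists2 x', x = (k + x')%N & in_block s l b x'.
Proof.
rewrite /in_block /offset /= => /andP[h1 h2]; exists (x - k)%N; first by lia.
by apply/andP; split; lia.
Qed.

Lemma in_block0 k s l y : in_block (k :: s) l 0 y -> (y < k)%N.
Proof. by rewrite /in_block /offset /= add0n. Qed.

Lemma in_block_ge k s l b x : in_block (k :: s) l b.+1 x -> (k <= x)%N.
Proof. by rewrite /in_block /offset /= => /andP[h _]; lia. Qed.

Section Staircase.
Variable C : numClosedFieldType.

(* The blocks of [M] have sizes [s] followed by [l]: block [b <= size s] has
   size [nth l s b] and starts at [offset s b]. Only the strictly lower block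
   part of [M] is constrained. *)
Definition staircase (s : seq nat) (l : nat) N (M : 'M[C]_N) : Prop :=
  [/\ (forall b c x y, (c.+1 < b)%N -> (b <= size s)%N ->
         in_block s l b x -> in_block s l c y -> ent M x y = 0),
      (forall c x y, (c < size s)%N ->
         in_block s l (size s) x -> in_block s l c y -> ent M x y = 0) &
      (forall b, (b.+1 < size s)%N ->
         (forall x y, in_block s l b.+1 x ->
            (offset s b + nth l s b.+1 <= y < offset s b + nth l s b)%N ->
            ent M x y = 0) /\
         (\matrix_(i < nth l s b.+1, j < nth l s b.+1)
              ent M (offset s b.+1 + i) (offset s b + j)) \in unitmx)].

Lemma staircase_castmx s l N N' (e : N = N') (M : 'M[C]_N) :
  staircase s l M -> staircase s l (castmx (e, e) M).
Proof. by case: N' / e; rewrite castmx_id. Qed.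

Lemma staircase_single k m (A : 'M[C]_k) (B : 'M[C]_(k, m)) (D : 'M[C]_m) :
  staircase [:: k] m (block_mx A B 0 D).
Proof.
split=> [b c x y /= ? ? | [|c] x y //= _ hx /in_block0 yk | b /= ?]; try lia.
have [x' -> _] := in_block_cons hx.
by rewrite ent_block_mx_dl // ent0.
Qed.

Lemma staircase_cons k m p a q t l (e1 : (p + a = m)%N) (e2 : (p + q = k)%N)
    (A : 'M[C]_k) (B : 'M[C]_(k, m)) (Sig : 'M[C]_p) (D : 'M[C]_m) :
  Sig \in unitmx -> staircase (p :: t) l D ->
  staircase [:: k, p & t] l (block_mx A B (castmx (e1, e2) (block_mx Sig 0 0 0)) D).
Proof.
set M := block_mx _ _ _ _ => uSig [farD lastD subD].
have entD x y : ent M (k + x) (k + y) = ent D x y by exact: ent_block_mx_dr.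
have entSig x y : (y < k)%N ->
    ent M (k + x) y = if (x < p)%N && (y < p)%N then ent Sig x y else 0.
  by move=> y_lt; rewrite ent_block_mx_dl // ent_castmx ent_block_mx_ul0.
split.
- move=> [|[|b]] c x y //= hcb hb /in_block_cons[x' -> hx'] hy.
  case: c hcb hy => [|c] hcb hy.
    by rewrite entSig ?(in_block0 hy) // ltnNge (in_block_ge hx').
  have [y' -> hy'] := in_block_cons hy.
  by rewrite entD (farD b.+1 c).
- move=> [|c] x y /= hc /in_block_cons[x' -> hx'] hy.
    by rewrite entSig ?(in_block0 hy) // ltnNge (in_block_ge hx').
  have [y' -> hy'] := in_block_cons hy.
  by rewrite entD (lastD c).
move=> [|b] hb.
  split=> [x y /in_block_cons[x' -> _] |].
    rewrite /offset /= => hy; rewrite entSig; last by lia.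
    have -> : (y < p)%N = false by lia.
    by rewrite andbF.
  have -> : \matrix_(i, j) ent M (offset [:: k, p & t] 1 + i) (offset [:: k, p & t] 0 + j)
            = Sig :> 'M_p.
    apply/matrixP => i j; have jk : (j < k)%N by have := ltn_ord j; lia.
    by rewrite mxE /offset /= addn0 add0n entSig // !ltn_ord entE.
  exact: uSig.
have [subDa subDb] := subD b hb.
split=> [x y /in_block_cons[x' -> hx'] |].
  rewrite /offset /= => hy; have -> : y = (k + (y - k))%N by lia.
  by rewrite entD subDa //; rewrite /offset /=; lia.
congr (_ \in unitmx): subDb.
by apply/matrixP => i j; rewrite !mxE /offset /= -!addnA entD.
Qed.

Lemma unitary_staircase m k (S : 'M[C]_(k + m)) : (0 < k)%N ->
  exists (Q : 'M[C]_k) (W : 'M[C]_m) (t : seq nat) (l : nat),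
  [/\ Q \is unitarymx, W \is unitarymx,
      sorted geq (k :: t) && all (fun x => 0 < x)%N (k :: t),
      (sumn (k :: t) + l = k + m)%N &
      staircase (k :: t) l (ctr (block_mx Q 0 0 W) *m S *m block_mx Q 0 0 W)].
Proof.
elim/ltn_ind: m k S => m IH k S k0.
have [S21_0|S21_neq0] := eqVneq (dlsubmx S) 0.
  exists 1%:M, 1%:M, [::], m; split; rewrite ?unitarymx1 /= ?k0 ?addn0 //.
  by rewrite conj_block_diag S21_0 mulmx0 mul0mx; apply: staircase_single.
have [p [a [b [e1 [e2 [P [Q [Sig [rkS21 uP uQ uSig PSQ]]]]]]]]] :=
  unitary_rank_form (dlsubmx S).
have p_gt0 : (0 < p)%N by rewrite -rkS21 lt0n mxrank_eq0.
have a_lt_m : (a < m)%N by lia.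
pose S22 := castmx (esym e1, esym e1) (P *m drsubmx S *m ctr P).
have [Q2 [W2 [t [l [uQ2 uW2 sorted_t sum_t St]]]]] := IH a a_lt_m p S22 p_gt0.
set U2 := block_mx Q2 0 0 W2 in St.
pose W := ctr P *m castmx (e1, e1) U2.
exists (ctr Q), W, (p :: t), l; split.
- by rewrite trmxC_unitary.
- by rewrite mul_unitarymx ?trmxC_unitary ?castmx_unitary ?block_diag_unitary.
- move: sorted_t; rewrite /= k0 => /andP[-> ->]; rewrite !andbT; lia.
- by move: sum_t => /=; lia.
have S21E : ctr W *m dlsubmx S *m ctr Q =
            castmx (e1, e2) (block_mx (ctr Q2 *m Sig) 0 0 0).
  rewrite ctr_mul ctrK ctr_castmx -!mulmxA (mulmxA P) PSQ mul_castmx.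
  by rewrite ctr_block_mx !ctr0 mulmx_block !mulmx0 !mul0mx !addr0.
have S22E : ctr W *m drsubmx S *m W = castmx (e1, e1) (ctr U2 *m S22 *m U2).
  rewrite ctr_mul ctrK ctr_castmx !mulmxA -(mulmxA _ _ (ctr P)) -!(mulmxA _ P).
  by rewrite -ctr_castmx conj_castmx (mulmxA P).
rewrite conj_block_diag S21E S22E; apply: staircase_cons.
  by rewrite unitmx_mul uSig unitarymx_unit ?trmxC_unitary.
exact: staircase_castmx.
Qed.

End Staircase.

Lemma sum_nth_take (s : seq nat) l i : (i <= size s)%N ->
  (\sum_(q < i) nth l s q)%N = sumn (take i s).
Proof.
by elim: s i => [|x s IH] [|i] //= hi; rewrite ?big_ord0 // big_ord_recl /= IH.
Qed.

Lemma sum_nth_offset (s : seq nat) l (i : 'I_(size s).+1) :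
  (\sum_(q < (size s).+1 | (q < i)%N) nth l s q)%N = offset s i.
Proof.
have i_le : (i <= size s)%N by rewrite -ltnS.
by rewrite -(big_ord_widen _ (fun q => nth l s q)) ?sum_nth_take // ltnW.
Qed.

Lemma sum_nth_size (s : seq nat) l :
  (\sum_(q < (size s).+1) nth l s q)%N = (sumn s + l)%N.
Proof. by rewrite big_ord_recr /= sum_nth_take // take_size nth_default. Qed.

Lemma offset_cons_ge k t i : (0 < i)%N -> (k <= offset (k :: t) i)%N.
Proof. by case: i => // i _; rewrite /offset /= leq_addr. Qed.

Lemma in_block_offset (s : seq nat) l (i : 'I_(size s).+1) (a : 'I_(nth l s i)) :
  in_block s l i (offset s i + a).
Proof. by rewrite /in_block leq_addr ltn_add2l ltn_ord. Qed.

Lemma sorted_geq_nth (s : seq nat) l i j : sorted geq s ->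
  (i <= j)%N -> (j < size s)%N -> (nth l s j <= nth l s i)%N.
Proof.
move=> s_sorted ij js.
have geq_trans : transitive geq by move=> y x z xy yz; apply: leq_trans yz xy.
by apply: (sorted_leq_nth geq_trans leqnn) => //; rewrite inE (leq_ltn_trans ij).
Qed.

Section Blocks.
Variables (C : numClosedFieldType) (s : seq nat) (l n : nat).
Variable hs : (\sum_(i < (size s).+1) nth l s i)%N = n.
Implicit Types (M : 'M[C]_n) (i j : 'I_(size s).+1).

Lemma blk_offset M i j a b :
  blk hs M i j a b = ent M (offset s i + a) (offset s j + b).
Proof.
rewrite /blk /submxblock /mxsub mxE -entE ent_castmx !tagnat.RankEsum.
by rewrite !sum_nth_offset.
Qed.

Lemma blk_skew M i j : ctr M = - M -> blk hs M i j = - ctr (blk hs M j i).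
Proof.
move=> skM; apply/matrixP => a b.
by rewrite blk_offset mxE ctr_entry blk_offset (ent_skew _ _ skM).
Qed.

Lemma blk_skewhermmx M i : ctr M = - M -> skewhermmx (blk hs M i i).
Proof. by move=> skM; rewrite /skewhermmx {2}blk_skew // opprK. Qed.

Section StaircaseBlocks.
Variable M : 'M[C]_n.
Hypotheses (stM : staircase s l M) (skM : ctr M = - M).

Lemma staircase_blk_far i j : (j.+1 < i)%N \/ (i.+1 < j)%N -> blk hs M i j = 0.
Proof.
have [farM _ _] := stM.
have farE i' j' : (j'.+1 < i')%N -> blk hs M i' j' = 0.
  move=> ji; apply/matrixP => a b.
  by rewrite blk_offset mxE (farM i' j') ?in_block_offset // -ltnS.
by case=> [/farE //|/farE ij]; rewrite blk_skew // ij ctr0 oppr0.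
Qed.

Lemma staircase_blk_last i : (i < size s)%N ->
  blk hs M i ord_max = 0 /\ blk hs M ord_max i = 0.
Proof.
move=> i_lt; have [_ lastM _] := stM.
have last0 : blk hs M ord_max i = 0.
  apply/matrixP => a b; rewrite blk_offset mxE (lastM i) ?in_block_offset //.
  exact: (in_block_offset (i := ord_max)).
by rewrite blk_skew // last0 ctr0 oppr0.
Qed.

Lemma staircase_blk_sub i j : sorted geq s -> i = j.+1 :> nat -> (i < size s)%N ->
  exists (k : nat) (e : nth l s j = (nth l s i + k)%N) (Sig : 'M[C]_(nth l s i)),
    Sig \in unitmx /\ castmx (erefl, e) (blk hs M i j) = row_mx Sig 0.
Proof.
move=> s_sorted ij i_lt; have [_ _ subM] := stM.
have ji : (nth l s i <= nth l s j)%N by apply: sorted_geq_nth; rewrite // ij.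
have jS : (j.+1 < size s)%N by rewrite -ij.
have [zeroM uSig] := subM j jS.
exists (nth l s j - nth l s i)%N, (esym (subnKC ji)).
exists (\matrix_(a, c) ent M (offset s i + a) (offset s j + c)); split.
  by case: i ij {i_lt ji} => i' ? /= ij; move: uSig; rewrite ij.
apply/matrixP => a c; rewrite castmxE /= blk_offset.
have [c' cE|c' cE] := splitP c.
  by rewrite (_ : c = lshift _ c') ?row_mxEl ?mxE //; apply: val_inj.
rewrite (_ : c = rshift _ c') ?row_mxEr ?mxE /=; last exact: val_inj.
apply: zeroM; first by rewrite -ij in_block_offset.
by rewrite -ij leq_add2l leq_addr ltn_add2l -ltn_subRL ltn_ord.
Qed.

End StaircaseBlocks.
End Blocks.

Section LeadingBlock.
Variables (C : numClosedFieldType) (k : nat) (t : seq nat) (l n m : nat).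
Variables (hs : (\sum_(i < (size t).+2) nth l (k :: t) i)%N = n) (e : (k + m = n)%N).
Variable A : 'M[C]_k.
Let M := castmx (e, e) (block_mx A 0 0 0 : 'M_(k + m)).

Lemma blk_block_mx00 : blk hs M ord0 ord0 = A.
Proof.
apply/matrixP => a b.
by rewrite blk_offset ent_castmx ent_block_mx_ul0 /offset /= !add0n !ltn_ord entE.
Qed.

Lemma blk_block_mx0 i j : (i, j) != (ord0, ord0) -> blk hs M i j = 0.
Proof.
have offset_lt (i' : 'I_(size t).+2) (a : 'I_(nth l (k :: t) i')) :
    (offset (k :: t) i' + a < k)%N -> i' = ord0.
  move=> lt_k; apply/val_inj/eqP; rewrite /= -leqn0 leqNgt; apply: contraTN lt_k.
  by move/(@offset_cons_ge k t); rewrite -leqNgt => /leq_trans; apply; rewrite leq_addr.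
move=> ij; apply/matrixP => a b; rewrite blk_offset mxE ent_castmx ent_block_mx_ul0.
case: ifP => // /andP[/offset_lt i0 /offset_lt j0].
by exfalso; move: ij; rewrite i0 j0 eqxx.
Qed.

End LeadingBlock.

Lemma unitary_psd_staircase (C : numClosedFieldType) n (H S : 'M[C]_n) : psdmx H -> H != 0 ->
  exists (U : 'M[C]_n) (m : nat) (e : (\rank H + m = n)%N) (t : seq nat) (l : nat),
    [/\ U \is unitarymx,
        sorted geq (\rank H :: t) && all (fun x => 0 < x)%N (\rank H :: t),
        (sumn (\rank H :: t) + l = n)%N,
        exists2 H11 : 'M[C]_(\rank H), pdmx H11 &
          ctr U *m H *m U = castmx (e, e) (block_mx H11 0 0 0)
      & staircase (\rank H :: t) l (ctr U *m S *m U)].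
Proof.
move=> psdH H_neq0.
have [m [e [V [H11 [uV pdH11 VHV]]]]] := psdmx_unitary_compress psdH.
have rkH_gt0 : (0 < \rank H)%N by rewrite lt0n mxrank_eq0.
pose S0 := castmx (esym e, esym e) (ctr V *m S *m V).
have [Q [W [t [l [uQ uW tP sum_t St]]]]] := unitary_staircase S0 rkH_gt0.
set U1 := block_mx Q 0 0 W in St.
have conjU X : ctr (V *m castmx (e, e) U1) *m X *m (V *m castmx (e, e) U1) =
    castmx (e, e) (ctr U1 *m castmx (esym e, esym e) (ctr V *m X *m V) *m U1).
  by rewrite -conj_castmx ctr_mul !mulmxA.
exists (V *m castmx (e, e) U1), m, e, t, l; split=> //.
- by rewrite mul_unitarymx ?castmx_unitary ?block_diag_unitary.
- by rewrite sum_t.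
- exists (ctr Q *m H11 *m Q); first exact: pdmx_unitary_conj.
  rewrite conjU VHV castmxK conj_block_diag.
  by rewrite block_mxKul block_mxKur block_mxKdl block_mxKdr !mulmx0 !mul0mx.
by rewrite conjU; apply: staircase_castmx.
Qed.

(* Blocks are indexed 0 .. r-1 with r = r'.+2 >= 2; paper's block k is our k-1. *)
Theorem lemma4p1 (C : numClosedFieldType) (n : nat) (H S : 'M[C]_n) :
  psdmx H -> H != 0 -> skewhermmx S -> S != 0 ->
  exists (U : 'M[C]_n) (r' : nat) (nb : 'I_r'.+2 -> nat)
         (hs : (\sum_(i < r'.+2) nb i)%N = n),
    U \is unitarymx /\
        (forall i j : 'I_r'.+2, (i <= j)%N -> (j < r'.+1)%N -> (nb j <= nb i)%N) /\
        (forall i : 'I_r'.+2, (i < r'.+1)%N -> (0 < nb i)%N) /\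
        (* U^* H U = diag(H11, 0) with H11 positive definite *)
        (forall i j : 'I_r'.+2, (i, j) != (ord0, ord0) ->
            blk hs (ctr U *m H *m U) i j = 0) /\
        pdmx (blk hs (ctr U *m H *m U) ord0 ord0) /\
        (* block tridiagonal structure of U^* S U, last block decoupled *)
        (forall i j : 'I_r'.+2, (j.+1 < i)%N \/ (i.+1 < j)%N ->
            blk hs (ctr U *m S *m U) i j = 0) /\
        (forall i : 'I_r'.+2, (i < r'.+1)%N ->
            blk hs (ctr U *m S *m U) i ord_max = 0 /\
            blk hs (ctr U *m S *m U) ord_max i = 0) /\
        (forall i : 'I_r'.+2, skewhermmx (blk hs (ctr U *m S *m U) i i)) /\
        (* S_{i,i-1} = - S_{i-1,i}^* = [Sigma 0] with Sigma nonsingular, i = 2..r-1 *)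
        (forall i j : 'I_r'.+2, i = j.+1 :> nat -> (i < r'.+1)%N ->
            blk hs (ctr U *m S *m U) i j = - ctr (blk hs (ctr U *m S *m U) j i) /\
            exists (k : nat) (e : nb j = (nb i + k)%N) (Sig : 'M[C]_(nb i)),
              Sig \in unitmx /\
              castmx (erefl (nb i), e) (blk hs (ctr U *m S *m U) i j)
                = row_mx Sig (0 : 'M[C]_(nb i, k))).
Proof.
move=> psdH H_neq0; rewrite /skewhermmx => skS _.
have [U [m [e [t [l [uU /andP[t_sorted t_pos] sum_t [H11 pdH11 UHU] StU]]]]]] :=
  unitary_psd_staircase S psdH H_neq0.
have skSU : ctr (ctr U *m S *m U) = - (ctr U *m S *m U).
  by rewrite !ctr_mul ctrK skS mulNmx mulmxN mulmxA.
have hs : (\sum_(i < (size t).+2) nth l (\rank H :: t) i)%N = n.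
  by rewrite (sum_nth_size (\rank H :: t)) sum_t.
exists U, (size t), (fun i => nth l (\rank H :: t) i), hs.
split; first exact: uU.
split; first by move=> i j ij j_lt; apply: sorted_geq_nth.
split; first by move=> i i_lt; apply/(all_nthP l t_pos).
split; first by rewrite UHU; apply: blk_block_mx0.
split; first by rewrite UHU blk_block_mx00.
split; first exact: (staircase_blk_far (s := \rank H :: t) hs StU skSU).
split; first exact: (staircase_blk_last (s := \rank H :: t) hs StU skSU).
split; first by move=> i; apply: (blk_skewhermmx (s := \rank H :: t) hs).
move=> i j ij i_lt; split; first exact: (blk_skew (s := \rank H :: t) hs).
exact: (staircase_blk_sub (s := \rank H :: t) hs StU).
Qed.
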